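(* Let $F,L,K$ be number fields such that $K/F$ is cyclic of degree $n$ with $\mathrm{Gal}(K/F)=\langle\rho\rangle$, $K/L$ is cyclic of degree $m$ with $\mathrm{Gal}(K/L)=\langle\sigma\rangle$, and $\rho\sigma=\sigma\rho$; put $F_0=F\cap L$. Let $c\in\mathcal{O}_{F_0}^\times$ be such that $D=(K/F,\rho,c)$ is a division algebra, let $\mathcal{D}=\bigoplus_{i=0}^{n-1}\mathcal{O}_Ke^i$ (with $ex=\rho(x)e$, $e^n=c$) be its natural order, and extend $\sigma$ to $\mathcal{D}$ coefficientwise. Let $d\in\mathcal{O}_L^\times$ with $t^m-d$ irreducible in $D[t;\sigma]$ and $\Lambda=\mathcal{D}[t;\sigma]/\mathcal{D}[t;\sigma](t^m-d)$. Let $\mathcal{I}=\mathfrak{q}_1^{s_1}\cdots\mathfrak{q}_l^{s_l}$ be a non-zero ideal of $\mathcal{O}_{F_0}$ with distinct prime ideals $\mathfrak{q}_j$, and for $1\le j\le l$ let $$D_j=\big((\mathcal{O}_K/\mathfrak{q}_j^{s_j}\mathcal{O}_K)/(\mathcal{O}_F/\mathfrak{q}_j^{s_j}\mathcal{O}_F),\overline{\rho},c+\mathfrak{q}_j^{s_j}\mathcal{O}_K\big),$$ with $\overline{\rho}(u+\mathfrak{q}_j^{s_j}\mathcal{O}_K)=\rho(u)+\mathfrak{q}_j^{s_j}\mathcal{O}_K$, and with $\overline{\sigma}$ acting on $D_j$ coefficientwise via $\overline{\sigma}(u+\mathfrak{q}_j^{s_j}\mathcal{O}_K)=\sigma(u)+\mathfrak{q}_j^{s_j}\mathcal{O}_K$.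 If $\mathcal{D}/\mathcal{I}\mathcal{D}\cong D_1\times\dots\times D_l$, then $$\Lambda/\mathcal{I}\Lambda\cong D_1[t;\overline{\sigma}]/D_1[t;\overline{\sigma}](t^m-\bar d_1)\times\dots\times D_l[t;\overline{\sigma}]/D_l[t;\overline{\sigma}](t^m-\bar d_l),$$ equivalently $\Lambda/\mathcal{I}\Lambda\cong(D_1,\overline{\sigma},\bar d_1)\times\dots\times(D_l,\overline{\sigma},\bar d_l)$, where $\bar d_j=d+\mathfrak{q}_j^{s_j}\mathcal{O}_K$.
   Context: For a unital associative ring $S$ with injective endomorphism $\sigma$, $S[t;\sigma]$ is the skew polynomial ring with $ta=\sigma(a)t$. For monic $f$ of degree $m$, $S[t;\sigma]/S[t;\sigma]f$ (the Petit algebra) is the set of polynomials of degree $<m$ with multiplication $g\circ h=gh\bmod_r f$ (remainder of right division by $f$), a unital nonassociative ring; $(S,\sigma,g)$ denotes $S[t;\sigma]/S[t;\sigma](t^m-g)$. For commutative rings $S_0\subset S$ with $S_0\subset\mathrm{Fix}(\rho)$, $(S/S_0,\rho,c)$ denotes $S[e;\rho]/S[e;\rho](e^n-c)$, a generalized associative cyclic algebra when $c\in S_0$. Products of rings have componentwise operations. *)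

From HB Require Import structures.
From mathcomp Require Import all_boot all_order all_algebra all_field.
Set Implicit Arguments. Unset Strict Implicit. Unset Printing Implicit Defensive.
Import GRing.Theory.
Local Open Scope ring_scope.

(* "Setoid rings": a ring given by a carrier zmodType T, a subset [sdom] of  *)
(* representatives, an equivalence [seqv] (equality, or congruence modulo    *)
(* an ideal for quotient rings), a (possibly nonassociative) product and a   *)
(* unit.  Addition and zero are those of T.                                  *)
Record sring (T : zmodType) := SRing {
  sdom : T -> Prop;
  seqv : T -> T -> Prop;
  smul : T -> T -> T;
  sone : T }.

(* Petit algebra S[t;s]/S[t;s](t^m - g): polynomials of degree < m, stored as *)
(* coefficient vectors a : 'I_m -> S (a i = coefficient of t^i).  Product of *)
(* a t^i and b t^j is a s^i(b) t^(i+j); if i+j = k+m >= m, its remainder of  *)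
(* right division by t^m - g is a s^i(b) s^k(g) t^k, since                    *)
(* t^(k+m) = t^k (t^m - g) + s^k(g) t^k.                                      *)
Definition petit_mul (T : zmodType) (mul : T -> T -> T) (s : T -> T) (g : T)
  (m : nat) (a b : {ffun 'I_m -> T}) : {ffun 'I_m -> T} :=
  [ffun k : 'I_m => \sum_(i < m) \sum_(j < m)
     (if (i + j == k)%N then mul (a i) (iter i s (b j))
      else if (i + j == k + m)%N then mul (mul (a i) (iter i s (b j))) (iter k s g)
      else 0)].
Arguments petit_mul {T} mul s g m a b.

Definition const_poly (T : zmodType) (m : nat) (x : T) : {ffun 'I_m -> T} :=
  [ffun k : 'I_m => if (k == 0 :> nat) then x else 0].
Arguments const_poly {T} m x.

Definition petit (T : zmodType) (S : sring T) (s : T -> T) (g : T) (m : nat)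
  : sring {ffun 'I_m -> T} :=
  SRing (fun a : {ffun 'I_m -> T} => forall i, sdom S (a i))
        (fun a b : {ffun 'I_m -> T} => forall i, seqv S (a i) (b i))
        (petit_mul (smul S) s g m) (const_poly m (sone S)).

Definition coefwise (T : zmodType) (m : nat) (s : T -> T) (a : {ffun 'I_m -> T})
  : {ffun 'I_m -> T} := [ffun i => s (a i)].

(* The (left) ideal of A generated by the image of I under emb : R -> T,     *)
(* i.e. finite sums  sum_k emb(a_k) y_k  with a_k in I and y_k in A.  (Used  *)
(* only for central I, where it is the two-sided ideal I A.)                 *)
Definition ideal_ext (R : Type) (T : zmodType) (A : sring T) (emb : R -> T)
  (I : R -> Prop) (x : T) : Prop :=
  exists (k : nat) (a : 'I_k -> R) (y : 'I_k -> T),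
    [/\ forall i, I (a i), forall i, sdom A (y i) &
        x = \sum_(i < k) smul A (emb (a i)) (y i)].

Definition quot (T : zmodType) (A : sring T) (J : T -> Prop) : sring T :=
  SRing (sdom A) (fun x y => exists2 z, J z & seqv A (x - y) z) (smul A) (sone A).

Definition sprod (T : zmodType) (l : nat) (A : 'I_l -> sring T)
  : sring {ffun 'I_l -> T} :=
  SRing (fun x : {ffun 'I_l -> T} => forall j, sdom (A j) (x j))
        (fun x y : {ffun 'I_l -> T} => forall j, seqv (A j) (x j) (y j))
        (fun x y : {ffun 'I_l -> T} => [ffun j => smul (A j) (x j) (y j)])
        [ffun j => sone (A j)].

Definition siso (T U : zmodType) (A : sring T) (B : sring U) : Prop :=
  exists f : T -> U,
    (forall x, sdom A x -> sdom B (f x)) /\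
    (forall x y, sdom A x -> sdom A y -> (seqv B (f x) (f y) <-> seqv A x y)) /\
    (forall y, sdom B y -> exists2 x, sdom A x & seqv B (f x) y) /\
    (forall x y, sdom A x -> sdom A y -> seqv B (f (x + y)) (f x + f y)) /\
    (forall x y, sdom A x -> sdom A y -> seqv B (f (smul A x y)) (smul B (f x) (f y))) /\
    seqv B (f (sone A)) (sone B).

Definition division_ring (T : zmodType) (mul : T -> T -> T) : Prop :=
  forall a : T, a != 0 -> bijective (mul a) /\ bijective (fun x => mul x a).

Section NF.
Variable K : fieldExtType rat.

Definition integral (x : K) : Prop :=
  exists p : {poly int}, p \is monic /\ root (map_poly (fun z : int => z%:~R : K) p) x.

Definition ring_of_integers (E : {vspace K}) (x : K) : Prop := x \in E /\ integral x.

Definition unit_of (R : K -> Prop) (x : K) : Prop := [/\ R x, x != 0 & R x^-1].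

Definition field_ring : sring K := SRing (fun _ => True) (fun x y => x = y) *%R 1.
Definition OK_ring : sring K := SRing integral (fun x y => x = y) *%R 1.

Definition is_ideal (R J : K -> Prop) : Prop :=
  [/\ forall x, J x -> R x, J 0, forall x y, J x -> J y -> J (x + y)
    & forall r x, R r -> J x -> J (r * x)].

Definition prime_ideal (R J : K -> Prop) : Prop :=
  [/\ is_ideal R J, ~ J 1
    & forall a b, R a -> R b -> J (a * b) -> J a \/ J b].

Definition ideal_mul (J1 J2 : K -> Prop) (x : K) : Prop :=
  exists (k : nat) (a b : 'I_k -> K),
    [/\ forall i, J1 (a i), forall i, J2 (b i) & x = \sum_(i < k) a i * b i].

Definition ideal_pow (R J : K -> Prop) (s : nat) : K -> Prop :=
  iter s (ideal_mul J) R.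

Definition ideal_prod (R : K -> Prop) (l : nat) (P : 'I_l -> K -> Prop) : K -> Prop :=
  foldr (fun j acc => ideal_mul (P j) acc) R (enum 'I_l).

Definition cyclic_with_gen (E : {subfield K}) (r : {rmorphism K -> K}) (n : nat) :=
  [/\ \dim {:K} = (n * \dim E)%N,
      (forall x, iter n r x = x),
      (forall k, (0 < k < n)%N -> exists x, iter k r x != x)
    & forall tau : {rmorphism K -> K},
        (forall x, x \in E -> tau x = x) <-> exists k, forall x, tau x = iter k r x].

(* coefficients of a product g h in the skew polynomial ring T[t;s] *)
Definition skew_coef (T : zmodType) (mul : T -> T -> T) (s : T -> T)
  (g h : nat -> T) (p : nat) : T :=
  \sum_(i < p.+1) mul (g i) (iter i s (h (p - i)%N)).

Definition skew_irreducible (T : zmodType) (mul : T -> T -> T) (s : T -> T)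
  (f : nat -> T) : Prop :=
  ~ exists (a b : nat) (g h : nat -> T),
      [/\ (0 < a)%N /\ (0 < b)%N, g a != 0 /\ h b != 0,
          (forall i, (a < i)%N -> g i = 0), (forall i, (b < i)%N -> h i = 0)
        & forall p, skew_coef mul s g h p = f p].

Definition tm_minus (T : zmodType) (one : T) (m : nat) (d : T) (p : nat) : T :=
  if (p == 0)%N then - d else if (p == m)%N then one else 0.

Definition Dalg (rho : K -> K) (c : K) (n : nat) := petit field_ring rho c n.
Definition Dord (rho : K -> K) (c : K) (n : nat) := petit OK_ring rho c n.
Definition Lam (rho sigma : K -> K) (c d : K) (n m : nat) :=
  petit (Dord rho c n) (coefwise sigma) (const_poly n d) m.
Definition Dj (rho : K -> K) (c : K) (n : nat) (J : K -> Prop) :=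
  petit (quot OK_ring (ideal_ext OK_ring id J)) rho c n.
Definition Pj (rho sigma : K -> K) (c d : K) (n m : nat) (J : K -> Prop) :=
  petit (Dj rho c n J) (coefwise sigma) (const_poly n d) m.

End NF.

(* The rings Lambda/I Lambda and (D_j, sigma, d_j) are all built on the
   same coefficient vectors over K, with the same product and unit; they
   differ only in the congruence, which is coefficientwise modulo I O_K,
   resp. modulo q_j^{s_j} O_K.  Hence the diagonal map is an isomorphism as
   soon as the Chinese remainder theorem holds for O_K and the ideals
   q_j^{s_j} O_K.  This reduces to the pairwise comaximality of the q_j in
   O_{F_0}, i.e. to the maximality of nonzero primes q of a ring of integers:
   q contains a rational prime p, and an integer a outside q satisfies a
   relation D(a) a + N in q with N an integer outside q, so that N is
   invertible modulo p and a is invertible modulo q. *)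

From HB Require Import structures.
From mathcomp Require Import all_boot all_order all_algebra all_field.
From mathcomp Require Import ring.
From Stdlib Require Import Classical.
Import GRing.Theory.
Local Open Scope ring_scope.

Set Implicit Arguments. Unset Strict Implicit. Unset Printing Implicit Defensive.

Definition fin_sums (X Y : Type) (V : zmodType) (P : X -> Prop) (Q : Y -> Prop)
  (f : X -> Y -> V) (x : V) : Prop :=
  exists (k : nat) (a : 'I_k -> X) (b : 'I_k -> Y),
    [/\ forall i, P (a i), forall i, Q (b i) & x = \sum_(i < k) f (a i) (b i)].

Lemma ideal_ext_fin_sums (R : Type) (T : zmodType) (A : sring T) (emb : R -> T)
    (I : R -> Prop) :
  ideal_ext A emb I = fin_sums I (sdom A) (fun a y => smul A (emb a) y).
Proof. by []. Qed.

Section FinSums.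
Variables (X Y : Type) (V : zmodType) (P : X -> Prop) (Q : Y -> Prop).
Variable f : X -> Y -> V.

Lemma fin_sums0 : fin_sums P Q f 0.
Proof.
exists 0%N, (ffun0 (card_ord 0)), (ffun0 (card_ord 0)).
by split; [case | case | rewrite big_ord0].
Qed.

Lemma fin_sums1 a b : P a -> Q b -> fin_sums P Q f (f a b).
Proof. by move=> Pa Qb; exists 1%N, (fun=> a), (fun=> b); rewrite big_ord1. Qed.

Lemma fin_sumsD x y : fin_sums P Q f x -> fin_sums P Q f y -> fin_sums P Q f (x + y).
Proof.
move=> [k1 [a1 [b1 [Pa1 Qb1 ->]]]] [k2 [a2 [b2 [Pa2 Qb2 ->]]]].
exists (k1 + k2)%N,
  (fun i => match split i with inl i1 => a1 i1 | inr i2 => a2 i2 end),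
  (fun i => match split i with inl i1 => b1 i1 | inr i2 => b2 i2 end).
split; [by move=> i; case: (split i) .. |].
by rewrite big_split_ord; congr (_ + _); apply: eq_bigr => i _;
  [rewrite (unsplitK (inl i)) | rewrite (unsplitK (inr i))].
Qed.

Lemma fin_sums_big (I : Type) (r : seq I) (g : I -> V) :
  (forall i, fin_sums P Q f (g i)) -> fin_sums P Q f (\sum_(i <- r) g i).
Proof. by move=> Hg; apply: big_ind => //; [exact: fin_sums0 | exact: fin_sumsD]. Qed.

Lemma fin_sums_sub (P' : X -> Prop) (Q' : Y -> Prop) x :
  (forall a, P a -> P' a) -> (forall b, Q b -> Q' b) ->
  fin_sums P Q f x -> fin_sums P' Q' f x.
Proof.
move=> PP' QQ' [k [a [b [Pa Qb ->]]]].
by exists k, a, b; split=> // i; [apply: PP' | apply: QQ'].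
Qed.

End FinSums.

Lemma fin_sums_additive (X Y X' Y' : Type) (V W : zmodType)
    (P : X -> Prop) (Q : Y -> Prop) (f : X -> Y -> V)
    (P' : X' -> Prop) (Q' : Y' -> Prop) (f' : X' -> Y' -> W) (h : V -> W) x :
  h 0 = 0 -> {morph h : u v / u + v} ->
  (forall a b, P a -> Q b -> fin_sums P' Q' f' (h (f a b))) ->
  fin_sums P Q f x -> fin_sums P' Q' f' (h x).
Proof.
move=> h0 hD hgen [k [a [b [Pa Qb ->]]]]; rewrite (big_morph h hD h0).
by apply: fin_sums_big => i; apply: hgen.
Qed.

Section Integral.
Variable K : fieldExtType rat.

Lemma integralE (x : K) : integral x <-> integralOver (intr : int -> K) x.
Proof. by split=> [[p [pm px]] | [p pm px]]; exists p. Qed.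

Lemma integralD (x y : K) : integral x -> integral y -> integral (x + y).
Proof. by move=> /integralE ix /integralE iy; apply/integralE/integral_add. Qed.

Lemma integralM (x y : K) : integral x -> integral y -> integral (x * y).
Proof. by move=> /integralE ix /integralE iy; apply/integralE/integral_mul. Qed.

Lemma integralN (x : K) : integral x -> integral (- x).
Proof. by move=> /integralE ix; apply/integralE/integral_opp. Qed.

Lemma integralB (x y : K) : integral x -> integral y -> integral (x - y).
Proof. by move=> ix iy; apply/integralD/integralN. Qed.

Lemma integral_int (z : int) : integral (z%:~R : K).
Proof. exact/integralE/(integral_id (intr : {rmorphism int -> K})). Qed.

Lemma integral_0 : integral (0 : K). Proof. exact: (integral_int 0). Qed.

Definition extOK (J : K -> Prop) : K -> Prop := ideal_ext (OK_ring K) id J.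

Lemma extOK0 J : extOK J 0. Proof. exact: fin_sums0. Qed.

Lemma extOKD J x y : extOK J x -> extOK J y -> extOK J (x + y).
Proof. exact: fin_sumsD. Qed.

Lemma extOK_gen J a y : J a -> integral y -> extOK J (a * y).
Proof. exact: (fin_sums1 (fun a y => smul (OK_ring K) (id a) y)). Qed.

Lemma extOK_sub (J J' : K -> Prop) x : (forall a, J a -> J' a) -> extOK J x -> extOK J' x.
Proof. by move=> JJ'; apply: fin_sums_sub. Qed.

Lemma extOK_mul (J1 J2 : K -> Prop) a z :
  J1 a -> extOK J2 z -> extOK (ideal_mul J1 J2) (a * z).
Proof.
move=> J1a; apply: (fin_sums_additive (h := *%R a)); [exact: mulr0 | exact: mulrDr |].
by move=> b y J2b iy; rewrite /= mulrA; apply: extOK_gen => //; apply: fin_sums1.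
Qed.

End Integral.

Section RingOfIntegers.
Variables (K : fieldExtType rat) (E : {subfield K}).
Local Notation OE := (ring_of_integers E).

Lemma roiD x y : OE x -> OE y -> OE (x + y).
Proof. by move=> [Ex ix] [Ey iy]; split; [exact: rpredD | exact: integralD]. Qed.

Lemma roiM x y : OE x -> OE y -> OE (x * y).
Proof. by move=> [Ex ix] [Ey iy]; split; [exact: rpredM | exact: integralM]. Qed.

Lemma roiN x : OE x -> OE (- x).
Proof. by move=> [Ex ix]; split; [rewrite memvN | exact: integralN]. Qed.

Lemma roi_int (z : int) : OE z%:~R.
Proof. by split; [exact: rpred_int | exact: integral_int]. Qed.

Lemma roi_nat (k : nat) : OE k%:R.
Proof. by rewrite pmulrn; exact: roi_int. Qed.

Lemma roi0 : OE 0. Proof. exact: (roi_nat 0). Qed.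
Lemma roi1 : OE 1. Proof. exact: (roi_nat 1). Qed.

Lemma roi_sum (I : Type) (r : seq I) (g : I -> K) :
  (forall i, OE (g i)) -> OE (\sum_(i <- r) g i).
Proof. by move=> Hg; apply: big_ind => //; [exact: roi0 | exact: roiD]. Qed.

Lemma roiX x k : OE x -> OE (x ^+ k).
Proof.
by move=> Rx; elim: k => [|k IH]; [rewrite expr0; exact: roi1 | rewrite exprS; apply: roiM].
Qed.

Lemma roi_horner (p : {poly int}) x : OE x -> OE (map_poly intr p).[x].
Proof.
move=> Rx; rewrite horner_coef; apply: roi_sum => i.
by rewrite coef_map; apply: roiM; [exact: roi_int | exact: roiX].
Qed.

Section Ideal.
Variable J : K -> Prop.
Hypothesis HJ : is_ideal OE J.

Lemma ideal_roi x : J x -> OE x. Proof. by case: HJ => sub *; apply: sub. Qed.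
Lemma ideal0 : J 0. Proof. by case: HJ. Qed.
Lemma idealD x y : J x -> J y -> J (x + y). Proof. by case: HJ => _ _ D _; apply: D. Qed.
Lemma idealMl r x : OE r -> J x -> J (r * x). Proof. by case: HJ => _ _ _ M; apply: M. Qed.
Lemma idealMr r x : OE r -> J x -> J (x * r). Proof. by rewrite mulrC; apply: idealMl. Qed.

Lemma idealN x : J x -> J (- x).
Proof. by rewrite -mulN1r; apply: idealMl; apply/roiN/roi1. Qed.

Lemma idealB x y : J x -> J y -> J (x - y).
Proof. by move=> Jx Jy; apply/idealD/idealN. Qed.

Lemma ideal_sum (I : Type) (r : seq I) (g : I -> K) :
  (forall i, J (g i)) -> J (\sum_(i <- r) g i).
Proof. by move=> Hg; apply: big_ind => //; [exact: ideal0 | exact: idealD]. Qed.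

End Ideal.

Lemma is_ideal_roi : is_ideal OE OE.
Proof. by split=> //; [exact: roi0 | exact: roiD | exact: roiM]. Qed.

Lemma is_ideal_mul (J1 J2 : K -> Prop) :
  is_ideal OE J1 -> is_ideal OE J2 -> is_ideal OE (ideal_mul J1 J2).
Proof.
move=> HJ1 HJ2; split.
- move=> _ [k [a [b [Ja Jb ->]]]]; apply: roi_sum => i.
  by apply: roiM; [apply: (ideal_roi HJ1) | apply: (ideal_roi HJ2)].
- exact: fin_sums0.
- exact: fin_sumsD.
- move=> r x Rr; apply: (fin_sums_additive (h := *%R r)); [exact: mulr0 | exact: mulrDr |].
  by move=> a b Ja Jb; rewrite mulrA; apply: fin_sums1 => //; apply: idealMl.
Qed.

Lemma ideal_mul_subl (J1 J2 : K -> Prop) x :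
  is_ideal OE J1 -> is_ideal OE J2 -> ideal_mul J1 J2 x -> J1 x.
Proof.
move=> HJ1 HJ2 [k [a [b [Ja Jb ->]]]]; apply: (ideal_sum HJ1) => i.
exact/(idealMr HJ1)/Ja/(ideal_roi HJ2).
Qed.

Lemma ideal_mul_subr (J1 J2 : K -> Prop) x :
  is_ideal OE J1 -> is_ideal OE J2 -> ideal_mul J1 J2 x -> J2 x.
Proof.
move=> HJ1 HJ2 [k [a [b [Ja Jb ->]]]]; apply: (ideal_sum HJ2) => i.
exact/(idealMl HJ2)/Jb/(ideal_roi HJ1).
Qed.

Lemma ideal_mulC (J1 J2 : K -> Prop) x : ideal_mul J1 J2 x -> ideal_mul J2 J1 x.
Proof.
move=> [k [a [b [Ja Jb ->]]]]; exists k, b, a; split=> //.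
by apply: eq_bigr => i _; rewrite mulrC.
Qed.

Lemma is_ideal_pow J s : is_ideal OE J -> is_ideal OE (ideal_pow OE J s).
Proof. by move=> HJ; elim: s => [|s IH] /=; [exact: is_ideal_roi | exact: is_ideal_mul]. Qed.

Lemma ideal_pow_sub J s x : is_ideal OE J -> (0 < s)%N -> ideal_pow OE J s x -> J x.
Proof. by move=> HJ; case: s => // s _; apply: ideal_mul_subl HJ (is_ideal_pow s HJ). Qed.

Lemma ideal_pow_exp J s e : J e -> OE e -> ideal_pow OE J s (e ^+ s).
Proof.
move=> Je Re; elim: s => [|s IH] /=; first by rewrite expr0; exact: roi1.
by rewrite exprS; apply: fin_sums1.
Qed.

(* [ideal_prod OE l P] is convertible to [ideal_prod_seq P (enum 'I_l)]. *)
Definition ideal_prod_seq (I : Type) (A : I -> K -> Prop) (r : seq I) : K -> Prop :=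
  foldr (fun j acc => ideal_mul (A j) acc) OE r.

Lemma is_ideal_prod_seq (I : Type) (A : I -> K -> Prop) r :
  (forall j, is_ideal OE (A j)) -> is_ideal OE (ideal_prod_seq A r).
Proof.
by move=> HA; elim: r => [|j r IH] /=; [exact: is_ideal_roi | exact: is_ideal_mul].
Qed.

Lemma ideal_prod_seq_sub (I : eqType) (A : I -> K -> Prop) r j x :
  (forall j, is_ideal OE (A j)) -> j \in r -> ideal_prod_seq A r x -> A j x.
Proof.
move=> HA; elim: r x => [|k r IH] x //=; rewrite inE => /orP[/eqP -> | jr] Hx.
  exact: ideal_mul_subl (HA k) (is_ideal_prod_seq r HA) Hx.
exact/IH/(ideal_mul_subr (HA k) (is_ideal_prod_seq r HA) Hx).
Qed.

Lemma extOK_roi x : integral x -> extOK OE x.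
Proof. by move=> ix; rewrite -[x]mul1r; apply: extOK_gen => //; exact: roi1. Qed.

Lemma prime_ideal0 : prime_ideal OE (fun z => z = 0).
Proof.
split; first split.
- by move=> _ ->; exact: roi0.
- by [].
- by move=> x y -> ->; rewrite addr0.
- by move=> r x _ ->; rewrite mulr0.
- exact/eqP/oner_neq0.
- by move=> a b _ _ /eqP; rewrite mulf_eq0 => /orP[] /eqP; [left | right].
Qed.

Lemma prime_ideal_integral_relation q a (P : {poly int}) :
  prime_ideal OE q -> OE a -> ~ q a -> P \is monic -> q (map_poly intr P).[a] ->
  exists (D : {poly int}) (N : int), ~ q N%:~R /\ q ((map_poly intr D).[a] * a + N%:~R).
Proof.
move=> [Jq q1 qprime] Ra qa; elim/poly_ind: P => [|D N IH]; first by rewrite monicE lead_coef0.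
rewrite rmorphD rmorphM /= map_polyX map_polyC hornerMXaddC => Pm qP.
have [qN | qN] := classic (q N%:~R); last by exists D, N.
have qDa : q ((map_poly intr D).[a] * a) by rewrite -[_ * a](addrK N%:~R); apply: idealB.
have [qD | //] := qprime _ _ (roi_horner D Ra) Ra qDa.
have [D0 | D0] := eqVneq D 0.
  by move: Pm qN; rewrite D0 mul0r add0r monicE lead_coefC => /eqP ->.
apply: IH qD; rewrite monicE -(eqP Pm) lead_coefDl ?lead_coefMX // size_mulX //.
by rewrite ltnS (leq_trans (size_polyC_leq1 _)) // lt0n size_poly_eq0.
Qed.

Lemma roi_dvd_nonzero_int x : OE x -> x != 0 ->
  exists2 N : int, N != 0 & exists2 y, OE y & N%:~R = x * y.
Proof.
move=> Rx /eqP x0; have [P [Pm Px]] := Rx.2.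
have [D [N [N0 DN]]] := prime_ideal_integral_relation prime_ideal0 Rx x0 Pm (eqP Px).
exists N; first by apply/eqP => N_0; apply: N0; rewrite N_0.
exists (- (map_poly intr D).[x]); first exact/roiN/roi_horner.
by apply/eqP; rewrite mulrN mulrC -addr_eq0 addrC DN.
Qed.

Lemma prime_ideal_nat q : prime_ideal OE q -> (exists x, q x /\ x <> 0) ->
  exists2 p, prime p & q p%:R.
Proof.
move=> [Jq q1 qprime] [x [qx /eqP x0]].
have [N N0 [y Ry Ny]] := roi_dvd_nonzero_int (ideal_roi Jq qx) x0.
have qN : q `|N|%:R.
  have : q N%:~R by rewrite Ny; apply: idealMr.
  by case: N {N0 Ny} => k // /(idealN Jq); rewrite NegzE mulrNz opprK.
have : (0 < `|N|)%N by rewrite absz_gt0.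
move: `|N|%N qN => n; elim/ltn_ind: n => n IH qn n0.
have [n_le1 | n_gt1] := leqP n 1.
  have n_1 : n = 1%N by apply/eqP; rewrite eqn_leq n_le1.
  by move: qn; rewrite n_1.
have p_prime := pdiv_prime n_gt1.
move: qn; rewrite -(divnK (pdiv_dvd n)) natrM.
case/qprime; [exact: roi_nat | exact: roi_nat | move=> qm | by exists (pdiv n)].
apply: IH qm _; first by rewrite ltn_Pdiv ?prime_gt1.
by rewrite divn_gt0 ?pdiv_gt0 // dvdn_leq ?pdiv_dvd.
Qed.

Lemma prime_ideal_maximal q a : prime_ideal OE q -> (exists x, q x /\ x <> 0) ->
  OE a -> ~ q a -> exists2 r, OE r & q (1 - r * a).
Proof.
move=> qP qnz Ra qa; have [Jq _ _] := qP.
have [p p_prime qp] := prime_ideal_nat qP qnz.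
have [P [Pm /eqP Pa]] := Ra.2.
have qPa : q (map_poly intr P).[a] by rewrite Pa; exact: ideal0 Jq.
have [D [N [qN qDN]]] := prime_ideal_integral_relation qP Ra qa Pm qPa.
have coNp : coprimez N p.
  rewrite coprimezE coprime_sym prime_coprime //; apply/negP => pN; apply: qN.
  by rewrite -(divzK (pN : (p%:Z %| N)%Z)) intrM; apply: idealMl => //; exact: roi_int.
have [[u v] /= Buv] := coprimezP _ _ coNp.
have {}Buv : u%:~R * N%:~R + v%:~R * p%:R = 1 :> K.
  by rewrite pmulrn -!intrM -intrD Buv.
exists (- (u%:~R * (map_poly intr D).[a])).
  by apply/roiN/roiM; [exact: roi_int | exact: roi_horner].
set U := u%:~R in Buv *; set V := v%:~R in Buv *; set Da := (map_poly intr D).[a] in qDN *.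
have -> : 1 - - (U * Da) * a = U * (Da * a + N%:~R) + V * p%:R.
  by rewrite -{1}Buv; ring.
by apply: (idealD Jq); apply: (idealMl Jq) => //; exact: roi_int.
Qed.

Definition comaximal (J1 J2 : K -> Prop) := exists a b, [/\ J1 a, J2 b & a + b = 1].

Lemma comaximal_sym J1 J2 : comaximal J1 J2 -> comaximal J2 J1.
Proof. by case=> a [b [J1a J2b ab1]]; exists b, a; rewrite addrC. Qed.

Lemma comaximal_powl J1 J2 s : is_ideal OE J1 -> is_ideal OE J2 -> comaximal J1 J2 ->
  comaximal (ideal_pow OE J1 s) J2.
Proof.
move=> HJ1 HJ2 [a [b [J1a J2b ab1]]]; have Ra := ideal_roi HJ1 J1a.
exists (a ^+ s), (1 - a ^+ s); split; [exact: ideal_pow_exp | | by rewrite addrC subrK].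
have -> : 1 - a ^+ s = b * \sum_(i < s) a ^+ i.
  by rewrite -opprB subrX1 -mulNr opprB -ab1 addrC addKr.
by apply: (idealMr HJ2) => //; apply: roi_sum => i; exact: roiX.
Qed.

Lemma comaximal_pow J1 J2 s t : is_ideal OE J1 -> is_ideal OE J2 -> comaximal J1 J2 ->
  comaximal (ideal_pow OE J1 s) (ideal_pow OE J2 t).
Proof.
move=> HJ1 HJ2 co12; apply: comaximal_sym; apply: comaximal_powl => //.
  exact: is_ideal_pow.
by apply: comaximal_sym; apply: comaximal_powl.
Qed.

Lemma prime_ideal_comaximal q1 q2 : prime_ideal OE q1 -> prime_ideal OE q2 ->
  (exists x, q1 x /\ x <> 0) -> (exists x, q2 x /\ x <> 0) ->
  (exists x, ~ (q1 x <-> q2 x)) -> comaximal q1 q2.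
Proof.
move=> q1P q2P q1nz q2nz [x q12x]; have [Jq1 _ _] := q1P; have [Jq2 _ _] := q2P.
have [q1x | q1x] := classic (q1 x).
  have q2x : ~ q2 x by move=> q2x; apply: q12x.
  have [r Rr qr] := prime_ideal_maximal q2P q2nz (ideal_roi Jq1 q1x) q2x.
  by exists (r * x), (1 - r * x); split; [exact: idealMl | | rewrite addrC subrK].
have q2x : q2 x by apply: NNPP => q2x; apply: q12x.
have [r Rr qr] := prime_ideal_maximal q1P q1nz (ideal_roi Jq2 q2x) q1x.
by exists (1 - r * x), (r * x); split; [| exact: idealMl | rewrite subrK].
Qed.

Section ChineseRemainder.
Variables (I : eqType) (A : I -> K -> Prop).
Hypothesis HA : forall j, is_ideal OE (A j).
Hypothesis coA : forall j k, j != k -> comaximal (A j) (A k).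

Lemma crt_delta j r : j \notin r ->
  exists e, [/\ OE e, A j (1 - e) & ideal_prod_seq A r e].
Proof.
elim: r => [|k r IH] /=.
  by exists 1; split; [exact: roi1 | rewrite subrr; exact: ideal0 | exact: roi1].
rewrite inE negb_or => /andP[jk /IH[e [Re Aje Pe]]].
have [a [b [Aja Akb ab1]]] := coA jk.
exists (b * e); split; [exact/roiM/Re/(ideal_roi (HA k)) | | exact: fin_sums1].
have -> : 1 - b * e = (1 - e) + e * a.
  have -> : b = 1 - a by rewrite -ab1 addrC addKr.
  by ring.
by apply: (idealD (HA j)) => //; apply: (idealMl (HA j)).
Qed.

Lemma crt_surj (r : seq I) (y : I -> K) : uniq r -> (forall j, integral (y j)) ->
  exists2 x, integral x & forall j, j \in r -> extOK (A j) (x - y j).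
Proof.
move=> + iy; elim: r => [|j r IH] /=; first by exists 0; [exact: integral_0 |].
move=> /andP[jr /IH[x ix Ax]]; have [e [Re Aje Pe]] := crt_delta jr.
have iyx := integralB (iy j) ix.
exists (x + e * (y j - x)); first exact/integralD/integralM/iyx/Re.2.
move=> k; rewrite inE => /predU1P[-> | kr].
  have -> : x + e * (y j - x) - y j = (1 - e) * (x - y j) by ring.
  by apply: extOK_gen => //; exact: integralB.
have -> : x + e * (y j - x) - y k = (x - y k) + e * (y j - x) by ring.
exact/extOKD/extOK_gen/iyx/(ideal_prod_seq_sub HA kr Pe)/Ax.
Qed.

Lemma crt_inj (r : seq I) z : uniq r -> integral z ->
  (forall j, j \in r -> extOK (A j) z) -> extOK (ideal_prod_seq A r) z.
Proof.
move=> + iz; elim: r => [|j r IH] /=; first by move=> _ _; exact: extOK_roi.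
move=> /andP[jr ur] Az; have [e [Re Aje Pe]] := crt_delta jr.
have Arz : extOK (ideal_prod_seq A r) z.
  by apply: IH => // k kr; apply: Az; rewrite inE kr orbT.
have Ajz : extOK (A j) z by apply: Az; rewrite inE eqxx.
have -> : z = (1 - e) * z + e * z by ring.
apply: extOKD; first exact: extOK_mul.
exact/(extOK_sub (@ideal_mulC _ _))/extOK_mul.
Qed.

End ChineseRemainder.
End RingOfIntegers.

Section PetitMul.
Variables (T : zmodType) (mul : T -> T -> T) (s : T -> T) (g : T) (m : nat).
Hypothesis mul0t : forall x, mul 0 x = 0.

Lemma petit_mul0l b : petit_mul mul s g m 0 b = 0.
Proof.
apply/ffunP => k; rewrite !ffunE; apply: big1 => i _; apply: big1 => j _.
by rewrite ffunE !mul0t; case: ifP => _ //; case: ifP.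
Qed.

Lemma petit_mul_const x b :
  petit_mul mul s g m (const_poly m x) b = [ffun k => mul x (b k)].
Proof.
apply/ffunP => k; rewrite !ffunE.
case: m k b => [|m'] k b; first by case: k.
rewrite big_ord_recl [X in _ + X]big1 ?addr0 => [|i _]; last first.
  by apply: big1 => j _; rewrite ffunE /= !mul0t; case: ifP => _ //; case: ifP.
rewrite ffunE /= (bigD1 k) //= big1 ?addr0 ?add0n ?eqxx // => j jk.
rewrite add0n ifN // ifN //.
by rewrite neq_ltn (leq_trans (ltn_ord j)) ?leq_addl.
Qed.

End PetitMul.

Section Lambda.
Variables (K : fieldExtType rat) (rho sigma : K -> K) (c d : K) (n m : nat).
Local Notation Lambda := (Lam rho sigma c d n m).
Local Notation scalar := (fun a : K => const_poly m (const_poly n a)).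

Lemma Lam_mul_scalar a (y : {ffun 'I_m -> {ffun 'I_n -> K}}) :
  smul Lambda (scalar a) y = [ffun i => [ffun k => a * y i k]].
Proof.
rewrite /= petit_mul_const => [|z]; last by apply: petit_mul0l => w; rewrite mul0r.
apply/ffunP => i; rewrite !ffunE petit_mul_const => [|w]; last by rewrite mul0r.
by apply/ffunP => k; rewrite !ffunE.
Qed.

Definition Lam_monomial (i : 'I_m) (k : 'I_n) (v : K) : {ffun 'I_m -> {ffun 'I_n -> K}} :=
  [ffun i' => [ffun k' => if (i' == i) && (k' == k) then v else 0]].

Lemma Lam_monomial_sum (w : {ffun 'I_m -> {ffun 'I_n -> K}}) :
  w = \sum_(i < m) \sum_(k < n) Lam_monomial i k (w i k).
Proof.
apply/ffunP => i; apply/ffunP => k; rewrite !sum_ffunE.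
under eq_bigr => i' _ do rewrite !sum_ffunE.
rewrite (bigD1 i) //= [X in _ + X]big1 ?addr0 => [|i' i'i]; last first.
  by apply: big1 => k' _; rewrite !ffunE eq_sym (negbTE i'i).
rewrite (bigD1 k) //= [X in _ + X]big1 ?addr0 => [|k' k'k]; last first.
  by rewrite !ffunE eqxx eq_sym (negbTE k'k).
by rewrite !ffunE !eqxx.
Qed.

Lemma Lam_ideal_extE (I : K -> Prop) w :
  ideal_ext Lambda scalar I w <-> forall i k, extOK I (w i k).
Proof.
split=> [[t [a [y [Ia Ly ->]]]] i k | Iw].
  rewrite !sum_ffunE; apply: fin_sums_big => j.
  by rewrite Lam_mul_scalar !ffunE; apply: extOK_gen; [exact: Ia | exact: Ly].
rewrite [w]Lam_monomial_sum ideal_ext_fin_sums.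
apply: fin_sums_big => i; apply: fin_sums_big => k.
have := Iw i k; rewrite /extOK ideal_ext_fin_sums => Iwik.
apply: (fin_sums_additive (h := Lam_monomial i k) _ _ _ Iwik).
- by apply/ffunP => i'; apply/ffunP => k'; rewrite !ffunE; case: ifP.
- move=> u v; apply/ffunP => i'; apply/ffunP => k'.
  by rewrite !ffunE; case: ifP; rewrite ?addr0.
move=> a y Ia iy /=.
have -> : Lam_monomial i k (a * y) = smul Lambda (scalar a) (Lam_monomial i k y).
  rewrite Lam_mul_scalar; apply/ffunP => i'; apply/ffunP => k'.
  by rewrite !ffunE; case: ifP; rewrite ?mulr0.
apply: fin_sums1 => // i' k'; rewrite !ffunE; case: ifP => _ //; exact: integral_0.
Qed.

Lemma Lam_quot_seqvE (I : K -> Prop) x y :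
  seqv (quot Lambda (ideal_ext Lambda scalar I)) x y <-> forall i k, extOK I (x i k - y i k).
Proof.
split=> [[z /Lam_ideal_extE Iz xyz] i k | Ixy].
  by have := xyz i k; rewrite !ffunE => ->.
by exists (x - y) => [|i k] //; apply/Lam_ideal_extE => i k; rewrite !ffunE.
Qed.

Lemma Pj_seqvE (J : K -> Prop) a b :
  seqv (Pj rho sigma c d n m J) a b <-> forall i k, extOK J (a i k - b i k).
Proof.
split=> Jab i k; first by case: (Jab i k) => z Jz ->.
by exists (a i k - b i k); first exact: Jab.
Qed.

Lemma Lam_quot_siso_prod (I : K -> Prop) (l : nat) (J : 'I_l -> K -> Prop) :
  (forall z, integral z -> extOK I z <-> forall j, extOK (J j) z) ->
  (forall y : 'I_l -> K, (forall j, integral (y j)) ->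
     exists2 x, integral x & forall j, extOK (J j) (x - y j)) ->
  siso (quot Lambda (ideal_ext Lambda scalar I))
       (sprod (fun j => Pj rho sigma c d n m (J j))).
Proof.
move=> IJ crt.
have seqv_eq u v : u = v -> seqv (sprod (fun j => Pj rho sigma c d n m (J j))) u v.
  by move=> -> j; apply/Pj_seqvE => i k; rewrite subrr; exact: extOK0.
exists (fun x => [ffun=> x]); split; [|split; [|split; [|split; [|split]]]].
- by move=> x Lx j i k; rewrite ffunE; exact: Lx.
- move=> x y Lx Ly; rewrite Lam_quot_seqvE.
  have ixy i k : integral (x i k - y i k) := integralB (Lx i k) (Ly i k).
  split=> [xy i k | xy j].
    by apply/(IJ _ (ixy i k)) => j; have /Pj_seqvE := xy j; rewrite !ffunE; apply.
  by apply/Pj_seqvE => i k; rewrite !ffunE; exact: (IJ _ (ixy i k)).1 (xy i k) j.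
- move=> y Ly.
  have /fin_all_exists[x xP] i : exists x : {ffun 'I_n -> K},
      forall k, integral (x k) /\ forall j, extOK (J j) (x k - y j i k).
    have /fin_all_exists[x xP] k :
        exists x, integral x /\ forall j, extOK (J j) (x - y j i k).
      by have [x ix Jx] := crt (fun j => y j i k) (fun j => Ly j i k); exists x.
    by exists [ffun k => x k] => k; rewrite ffunE.
  exists [ffun i => x i] => [i k | j]; rewrite ffunE; first by case: (xP i k).
  by apply/Pj_seqvE => i k; rewrite !ffunE; case: (xP i k).
(* Sums, products and units of the P_j are computed as in Lambda. *)
- by move=> x y _ _; apply: seqv_eq; apply/ffunP => j; rewrite !ffunE.
- by move=> x y _ _; apply: seqv_eq; apply/ffunP => j; rewrite !ffunE.
- by apply: seqv_eq; apply/ffunP => j; rewrite !ffunE.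
Qed.

End Lambda.

Theorem theorem3 (K : fieldExtType rat) (F L : {subfield K}) (n m : nat)
  (rho sigma : {rmorphism K -> K})
  (HF : cyclic_with_gen F rho n) (HL : cyclic_with_gen L sigma m)
  (Hcomm : forall x, rho (sigma x) = sigma (rho x))
  (c : K) (Hc : unit_of (ring_of_integers (F :&: L)%VS) c)
  (HD : division_ring (smul (Dalg rho c n)))
  (d : K) (Hd : unit_of (ring_of_integers L) d)
  (Hirr : skew_irreducible (smul (Dalg rho c n)) (coefwise sigma)
            (tm_minus (sone (Dalg rho c n)) m (const_poly n d)))
  (I : K -> Prop) (l : nat) (q : 'I_l -> K -> Prop) (s : 'I_l -> nat)
  (HI : is_ideal (ring_of_integers (F :&: L)%VS) I)
  (HI0 : exists x, I x /\ x <> 0)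
  (Hq : forall j, prime_ideal (ring_of_integers (F :&: L)%VS) (q j))
  (Hqd : forall j j', j != j' -> exists x, ~ (q j x <-> q j' x))
  (Hs : forall j, (0 < s j)%N)
  (HIfact : forall x, I x <->
     ideal_prod (ring_of_integers (F :&: L)%VS)
       (fun j => ideal_pow (ring_of_integers (F :&: L)%VS) (q j) (s j)) x)
  (Hiso : siso (quot (Dord rho c n) (ideal_ext (Dord rho c n) (const_poly n) I))
               (sprod (fun j => Dj rho c n
                          (ideal_pow (ring_of_integers (F :&: L)%VS) (q j) (s j))))) :
  siso (quot (Lam rho sigma c d n m)
             (ideal_ext (Lam rho sigma c d n m)
                (fun a => const_poly m (const_poly n a)) I))
       (sprod (fun j => Pj rho sigma c d n m
                  (ideal_pow (ring_of_integers (F :&: L)%VS) (q j) (s j)))).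
Proof.
pose E : {subfield K} := (F :&: L)%AS.
pose A := fun j => ideal_pow (ring_of_integers E) (q j) (s j).
have Aideal j : is_ideal (ring_of_integers E) (A j) by apply: is_ideal_pow; case: (Hq j).
have IA x j : I x -> A j x.
  by move/HIfact; apply: (ideal_prod_seq_sub Aideal); rewrite mem_enum.
have qnz j : exists x, q j x /\ x <> 0.
  have [x [Ix x0]] := HI0; exists x; split=> //.
  by apply: (ideal_pow_sub _ (Hs j)); [case: (Hq j) | exact: IA].
have coA j j' : j != j' -> comaximal (A j) (A j').
  move=> jj'; apply: comaximal_pow; [by case: (Hq j) | by case: (Hq j') |].
  exact: prime_ideal_comaximal (Hq j) (Hq j') (qnz j) (qnz j') (Hqd j j' jj').
apply: Lam_quot_siso_prod => [z iz | y iy].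
  split=> [Iz j | Az]; first exact: extOK_sub (IA^~ j) Iz.
  apply: (extOK_sub (fun x => (HIfact x).2)).
  by apply: (crt_inj Aideal coA (enum_uniq _) iz) => j _; exact: Az.
have [x ix Ax] := crt_surj Aideal coA (enum_uniq 'I_l) iy.
by exists x => // j; apply: Ax; rewrite mem_enum.
Qed.
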